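(* Let $0=t_0<t_1<t_2<\dots<t_m$ be real numbers and let $p_1,\dots,p_m\ge 0$ with $\sum_{j=1}^m p_j=1$. For $j\in[m]$ let $q_j=\sum_{k=j}^m p_k$, and let $\|T\|_2=\sqrt{\sum_{j=1}^m p_jt_j^2}$. Then $$\sum_{j=1}^m (t_j-t_{j-1})\sqrt{q_j}\ \le\ t_1+\|T\|_2\sqrt{\ln(t_m/t_1)}.$$
   Context: Interpretation: $t_j$ are the possible stopping times of an algorithm, $p_j$ the probability of stopping at time $t_j$, $q_j$ the probability of stopping at time $\ge t_j$, and $\|T\|_2$ the $\ell_2$-averaged stopping time. *)

From Stdlib Require Import Reals Arith.
Open Scope R_scope.

Fixpoint sum1 (m : nat) (f : nat -> R) : R :=
  match m with
  | O => 0
  | S k => sum1 k f + f (S k)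
  end.

Definition qtail (m : nat) (p : nat -> R) (j : nat) : R :=
  sum1 m (fun k => if Nat.leb j k then p k else 0).

Definition l2norm (m : nat) (p t : nat -> R) : R :=
  sqrt (sum1 m (fun j => p j * t j ^ 2)).

(* Split off the first increment t_1 (where q_1 = 1) and write each later
   increment as sqrt((t_j - t_{j-1}) / t_j) * sqrt((t_j - t_{j-1}) t_j q_j).
   By Cauchy-Schwarz it remains to bound the two sums: the first is at most
   sum_j ln (t_j / t_{j-1}) = ln (t_m / t_1) since 1 - 1/x <= ln x, and the
   second is at most sum_j (t_j^2 - t_{j-1}^2) q_j, which by Abel summation
   equals sum_k p_k t_k^2 = ||T||_2^2. *)
From Stdlib Require Import Reals Arith Lra Lia Psatz.
Open Scope R_scope.

Lemma sum1_ext n f g : (forall j, (1 <= j)%nat -> (j <= n)%nat -> f j = g j) ->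
  sum1 n f = sum1 n g.
Proof.
  induction n as [|n IH]; intros Hfg; simpl; [reflexivity|].
  rewrite IH, Hfg; [reflexivity|lia|lia|intros; apply Hfg; lia].
Qed.

Lemma sum1_le n f g : (forall j, (1 <= j)%nat -> (j <= n)%nat -> f j <= g j) ->
  sum1 n f <= sum1 n g.
Proof.
  induction n as [|n IH]; intros Hfg; simpl; [lra|].
  apply Rplus_le_compat; [apply IH; intros; apply Hfg|apply Hfg]; lia.
Qed.

Lemma sum1_nonneg n f : (forall j, (1 <= j)%nat -> (j <= n)%nat -> 0 <= f j) ->
  0 <= sum1 n f.
Proof.
  intros Hf. replace 0 with (sum1 n (fun _ => 0)) 
    by (clear Hf; induction n as [|n IH]; simpl; [|rewrite IH]; ring).
  now apply sum1_le.
Qed.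

Lemma sum1_plus n f g : sum1 n (fun j => f j + g j) = sum1 n f + sum1 n g.
Proof. induction n as [|n IH]; simpl; [lra|]. rewrite IH; ring. Qed.

Lemma sum1_scal n c f : sum1 n (fun j => c * f j) = c * sum1 n f.
Proof. induction n as [|n IH]; simpl; [lra|]. rewrite IH; ring. Qed.

Lemma sum1_shift n F : sum1 (S n) F = F 1%nat + sum1 n (fun j => F (S j)).
Proof. induction n as [|n IH]; [simpl; ring|]. cbn [sum1] in *. rewrite IH; ring. Qed.

Lemma sum1_telescope n f : sum1 n (fun j => f (S j) - f j) = f (S n) - f 1%nat.
Proof. induction n as [|n IH]; simpl in *; [ring|]. rewrite IH; ring. Qed.

Lemma sum1_comm n m f :
  sum1 n (fun j => sum1 m (fun k => f j k)) = sum1 m (fun k => sum1 n (fun j => f j k)).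
Proof.
  induction n as [|n IH]; simpl.
  - induction m as [|m IHm]; simpl; [reflexivity|]. rewrite <- IHm; ring.
  - rewrite IH, <- sum1_plus; reflexivity.
Qed.

Lemma sum1_truncate n k f : (k <= n)%nat ->
  sum1 n (fun j => if Nat.leb j k then f j else 0) = sum1 k f.
Proof.
  induction n as [|n IH]; intros Hkn.
  - replace k with 0%nat by lia; reflexivity.
  - destruct (Nat.eq_dec k (S n)) as [->|Hk].
    + apply sum1_ext; intros j _ Hj. now rewrite (proj2 (Nat.leb_le j (S n)) Hj).
    + cbn [sum1]. rewrite IH by lia.
      rewrite (proj2 (Nat.leb_gt (S n) k)) by lia; ring.
Qed.

Lemma sum1_abel m p f :
  sum1 m (fun j => (f j - f (pred j)) * qtail m p j) = sum1 m (fun k => p k * (f k - f 0%nat)).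
Proof.
  unfold qtail.
  transitivity (sum1 m (fun j => sum1 m (fun k =>
                  p k * (if Nat.leb j k then f j - f (pred j) else 0)))).
  { apply sum1_ext; intros j _ _. rewrite <- sum1_scal.
    apply sum1_ext; intros k _ _. destruct (Nat.leb j k); ring. }
  rewrite sum1_comm. apply sum1_ext; intros k Hk1 Hkm.
  rewrite sum1_scal, sum1_truncate by exact Hkm. f_equal.
  destruct k as [|k]; [lia|]. rewrite sum1_shift. cbn [pred]. rewrite sum1_telescope; ring.
Qed.

Lemma sqrt_cauchy_schwarz2 x y a b : 0 <= x -> 0 <= y -> 0 <= a -> 0 <= b ->
  sqrt x * sqrt y + sqrt a * sqrt b <= sqrt (x + a) * sqrt (y + b).
Proof.
  intros Hx Hy Ha Hb.
  rewrite <- (sqrt_mult (x + a)) by lra.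
  pose proof (sqrt_sqrt x Hx); pose proof (sqrt_sqrt y Hy).
  pose proof (sqrt_sqrt a Ha); pose proof (sqrt_sqrt b Hb).
  pose proof (sqrt_pos x); pose proof (sqrt_pos y).
  pose proof (sqrt_pos a); pose proof (sqrt_pos b).
  set (u := sqrt x) in *; set (v := sqrt y) in *; set (c := sqrt a) in *; set (d := sqrt b) in *.
  rewrite <- (sqrt_square (u * v + c * d)) by nra.
  apply sqrt_le_1_alt.
  pose proof (pow2_ge_0 (u * d - c * v)). nra.
Qed.

Lemma sum1_cauchy_schwarz n x y :
  (forall j, (1 <= j)%nat -> (j <= n)%nat -> 0 <= x j /\ 0 <= y j) ->
  sum1 n (fun j => sqrt (x j) * sqrt (y j)) <= sqrt (sum1 n x) * sqrt (sum1 n y).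
Proof.
  induction n as [|n IH]; intros Hxy; simpl.
  - rewrite sqrt_0; lra.
  - assert (Hx : 0 <= sum1 n x) by (apply sum1_nonneg; intros; apply Hxy; lia).
    assert (Hy : 0 <= sum1 n y) by (apply sum1_nonneg; intros; apply Hxy; lia).
    destruct (Hxy (S n)) as [HxS HyS]; try lia.
    pose proof (IH (fun j H1 H2 => Hxy j H1 ltac:(lia))).
    pose proof (sqrt_cauchy_schwarz2 _ _ _ _ Hx Hy HxS HyS). lra.
Qed.

Lemma ln_div a b : 0 < a -> 0 < b -> ln (b / a) = ln b - ln a.
Proof.
  intros Ha Hb. unfold Rdiv.
  rewrite ln_mult, ln_Rinv by (try apply Rinv_0_lt_compat; lra). ring.
Qed.

Lemma ln_div_ge a b : 0 < a -> 0 < b -> (b - a) / b <= ln (b / a).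
Proof.
  intros Ha Hb.
  pose proof (exp_ineq1_le (ln (a / b))) as Hexp.
  rewrite exp_ln in Hexp by (apply Rdiv_lt_0_compat; lra).
  rewrite ln_div in * by lra.
  replace ((b - a) / b) with (1 - a / b) by (field; lra). lra.
Qed.

Section StoppingTimes.

Variables (n : nat) (t p : nat -> R).
Hypothesis ht0 : t 0%nat = 0.
Hypothesis hinc : forall j, (j < S n)%nat -> t j < t (S j).
Hypothesis hp : forall j, (1 <= j)%nat -> (j <= S n)%nat -> 0 <= p j.
Hypothesis hsum : sum1 (S n) p = 1.

Let q := qtail (S n) p.

Lemma times_pos j : (1 <= j)%nat -> (j <= S n)%nat -> 0 < t j.
Proof.
  induction j as [|j IH]; intros Hj1 Hjm; [lia|].
  pose proof (hinc j ltac:(lia)).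
  destruct j as [|j]; [lra|]. pose proof (IH ltac:(lia) ltac:(lia)). lra.
Qed.

Lemma qtail_nonneg j : 0 <= q j.
Proof.
  apply sum1_nonneg; intros k Hk1 Hkm.
  destruct (Nat.leb j k); [now apply hp|lra].
Qed.

Lemma qtail_1 : q 1%nat = 1.
Proof.
  rewrite <- hsum. apply sum1_ext; intros [|j] Hj _; [lia|reflexivity].
Qed.

Lemma sum_relative_increments_le :
  sum1 n (fun j => (t (S j) - t j) / t (S j)) <= ln (t (S n) / t 1%nat).
Proof.
  apply Rle_trans with (sum1 n (fun j => ln (t (S j)) - ln (t j))).
  - apply sum1_le; intros j Hj1 Hjn.
    pose proof (times_pos j Hj1 ltac:(lia)); pose proof (times_pos (S j) ltac:(lia) ltac:(lia)).
    rewrite <- ln_div by lra. now apply ln_div_ge.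
  - rewrite (sum1_telescope n (fun j => ln (t j))).
    pose proof (times_pos 1 ltac:(lia) ltac:(lia)); pose proof (times_pos (S n) ltac:(lia) ltac:(lia)).
    rewrite ln_div by lra. lra.
Qed.

Lemma sum_weighted_increments_le :
  sum1 n (fun j => (t (S j) - t j) * t (S j) * q (S j)) <= sum1 (S n) (fun k => p k * t k ^ 2).
Proof.
  pose proof (sum1_abel (S n) p (fun j => t j ^ 2)) as Habel. cbv beta in Habel.
  fold q in Habel. rewrite ht0 in Habel.
  replace (sum1 (S n) (fun k => p k * t k ^ 2)) with
    (sum1 (S n) (fun k => p k * (t k ^ 2 - 0 ^ 2))) by (apply sum1_ext; intros; ring).
  rewrite <- Habel, sum1_shift. simpl pred. rewrite ht0, qtail_1.
  apply Rle_trans with (sum1 n (fun j => (t (S j) ^ 2 - t j ^ 2) * q (S j))).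
  - apply sum1_le; intros j Hj1 Hjn.
    pose proof (times_pos j Hj1 ltac:(lia)); pose proof (hinc j ltac:(lia)).
    pose proof (qtail_nonneg (S j)).
    assert (0 <= (t (S j) - t j) * t j * q (S j)) by (apply Rmult_le_pos; nra).
    nra.
  - pose proof (times_pos 1 ltac:(lia) ltac:(lia)). nra.
Qed.

Let x j := (t (S j) - t j) / t (S j).
Let y j := (t (S j) - t j) * t (S j) * q (S j).

Lemma increment_factors_nonneg j : (1 <= j)%nat -> (j <= n)%nat -> 0 <= x j /\ 0 <= y j.
Proof.
  intros Hj1 Hjn. unfold x, y.
  pose proof (hinc j ltac:(lia)); pose proof (times_pos (S j) ltac:(lia) ltac:(lia)).
  pose proof (qtail_nonneg (S j)).
  split; [apply Rmult_le_pos; [|left; apply Rinv_0_lt_compat]|apply Rmult_le_pos]; nra.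
Qed.

Lemma increment_factor j : (1 <= j)%nat -> (j <= n)%nat ->
  (t (S j) - t j) * sqrt (q (S j)) = sqrt (x j) * sqrt (y j).
Proof.
  intros Hj1 Hjn. destruct (increment_factors_nonneg j Hj1 Hjn) as [Hx Hy].
  pose proof (hinc j ltac:(lia)); pose proof (times_pos (S j) ltac:(lia) ltac:(lia)).
  pose proof (qtail_nonneg (S j)).
  rewrite <- sqrt_mult by assumption. unfold x, y.
  replace ((t (S j) - t j) / t (S j) * ((t (S j) - t j) * t (S j) * q (S j)))
    with ((t (S j) - t j) * (t (S j) - t j) * q (S j)) by (field; lra).
  rewrite sqrt_mult, sqrt_square by nra. reflexivity.
Qed.

Lemma later_increments_le :
  sum1 n (fun j => (t (S j) - t j) * sqrt (q (S j)))
    <= l2norm (S n) p t * sqrt (ln (t (S n) / t 1%nat)).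
Proof.
  rewrite (sum1_ext _ _ _ increment_factor).
  eapply Rle_trans; [apply sum1_cauchy_schwarz, increment_factors_nonneg|].
  rewrite Rmult_comm. unfold l2norm.
  apply Rmult_le_compat; try apply sqrt_pos; apply sqrt_le_1_alt.
  - apply sum_weighted_increments_le.
  - apply sum_relative_increments_le.
Qed.

End StoppingTimes.

Theorem mainTheorem8 (m : nat) (t p : nat -> R)
  (hm : (1 <= m)%nat)
  (ht0 : t 0%nat = 0)
  (hinc : forall j : nat, (j < m)%nat -> t j < t (S j))
  (hp : forall j : nat, (1 <= j)%nat -> (j <= m)%nat -> 0 <= p j)
  (hsum : sum1 m p = 1) :
  sum1 m (fun j => (t j - t (pred j)) * sqrt (qtail m p j))
    <= t 1%nat + l2norm m p t * sqrt (ln (t m / t 1%nat)).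
Proof.
  destruct m as [|n]; [lia|].
  rewrite sum1_shift. simpl pred.
  rewrite ht0, (qtail_1 n p hsum), sqrt_1, Rminus_0_r, Rmult_1_r.
  apply Rplus_le_compat_l, later_increments_le; assumption.
Qed.
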